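(* Let $r>0$ and let $z\colon[0,r)\to[0,r)$ be a homeomorphism with $(\alpha)z>\alpha$ for all $\alpha\in(0,r)$. Let $f$ be a permutation of $[0,r)$ such that $f$ commutes with $z$, $f$ is right-continuous at $0$, and $f$ has only finitely many points of discontinuity. Then $f$ is continuous (for the usual topology).
   Context: Maps act on the right: $(\alpha)z$ denotes the image of $\alpha$ under $z$, and $(\alpha)(fz)=((\alpha)f)z$. *)

From Stdlib Require Import Reals List.
Open Scope R_scope.

Definition Ico0 (r x : R) : Prop := 0 <= x < r.

Definition maps_into (D : R -> Prop) (f : R -> R) : Prop :=
  forall x, D x -> D (f x).

Definition cont_at_in (D : R -> Prop) (f : R -> R) (x : R) : Prop :=
  forall eps, 0 < eps -> exists delta, 0 < delta /\
    forall y, D y -> Rabs (y - x) < delta -> Rabs (f y - f x) < eps.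

Definition cont_on (D : R -> Prop) (f : R -> R) : Prop :=
  forall x, D x -> cont_at_in D f x.

Definition homeo_on (D : R -> Prop) (f : R -> R) : Prop :=
  maps_into D f /\ cont_on D f /\
  exists g : R -> R, maps_into D g /\ cont_on D g /\
    (forall x, D x -> g (f x) = x) /\ (forall y, D y -> f (g y) = y).

Definition perm_on (D : R -> Prop) (f : R -> R) : Prop :=
  maps_into D f /\
  (forall x y, D x -> D y -> f x = f y -> x = y) /\
  (forall y, D y -> exists x, D x /\ f x = y).

Definition right_cont_at_in (D : R -> Prop) (f : R -> R) (a : R) : Prop :=
  forall eps, 0 < eps -> exists delta, 0 < delta /\
    forall y, D y -> a <= y < a + delta -> Rabs (f y - f a) < eps.

Definition finitely_many_discont (D : R -> Prop) (f : R -> R) : Prop :=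
  exists l : list R, forall x, D x -> ~ cont_at_in D f x -> In x l.

From Stdlib Require Import Reals List Lra Lia FinFun Classical_Prop.
Open Scope R_scope.

(* Let g be the inverse of z.  Commutation gives f = z o f o g on
   [0,r), so by continuity of z and g, continuity of f at (x)g forces
   continuity of f at x; equivalently, discontinuity propagates from x to (x)g.
   Since (a)z > a on (0,r), z fixes 0 and (x)g < x for every x in (0,r).
   Hence a discontinuity at some x > 0 would produce the strictly decreasing
   orbit x > (x)g > (x)g^2 > ... of discontinuity points, an infinite set,
   contradicting finiteness.  At the endpoint 0 continuity is just
   right-continuity.  The file proves, in order: stability of continuity
   under composition and extensional equality; the backward propagation of
   continuity through the conjugation; the position of the inverse g; the
   fact that a strictly decreasing sequence cannot be enumerated by a list;
   and finally the theorem. *)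

Lemma cont_at_in_comp (D : R -> Prop) (h k : R -> R) (x : R) :
  maps_into D k -> D x -> cont_at_in D k x -> cont_at_in D h (k x) ->
  cont_at_in D (fun y => h (k y)) x.
Proof.
  intros Hk_into Dx Hk Hh eps Heps.
  destruct (Hh eps Heps) as [d1 [Hd1 H1]].
  destruct (Hk d1 Hd1) as [d2 [Hd2 H2]].
  exists d2; split; auto.
Qed.

Lemma cont_at_in_ext (D : R -> Prop) (f F : R -> R) (x : R) :
  (forall y, D y -> f y = F y) -> D x -> cont_at_in D F x -> cont_at_in D f x.
Proof.
  intros Hext Dx HF eps Heps.
  destruct (HF eps Heps) as [d [Hd H]].
  exists d; split; auto.
  intros y Dy Hy. rewrite (Hext y Dy), (Hext x Dx). auto.
Qed.

Lemma cont_at_in_conj (D : R -> Prop) (f z g : R -> R) (x : R) :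
  maps_into D f -> maps_into D g -> cont_on D z -> cont_on D g ->
  (forall y, D y -> f y = z (f (g y))) -> D x ->
  cont_at_in D f (g x) -> cont_at_in D f x.
Proof.
  intros Hf_into Hg_into Hz Hg Hconj Dx Hfg.
  apply (cont_at_in_ext D f (fun y => z (f (g y)))); auto.
  apply (cont_at_in_comp D (fun w => z (f w)) g); auto.
  apply (cont_at_in_comp D z f); auto.
Qed.

Lemma cont_at_left_endpoint (r : R) (f : R -> R) :
  right_cont_at_in (Ico0 r) f 0 -> cont_at_in (Ico0 r) f 0.
Proof.
  intros Hright eps Heps. destruct (Hright eps Heps) as [d [Hd H]].
  exists d; split; auto. intros y Dy Hy. apply H; auto.
  unfold Ico0 in Dy. rewrite Rminus_0_r, Rabs_right in Hy by lra. lra.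
Qed.

Lemma inverse_below_identity (r : R) (z g : R -> R) :
  maps_into (Ico0 r) g ->
  (forall y, Ico0 r y -> z (g y) = y) ->
  (forall a, 0 < a < r -> z a > a) ->
  forall x, 0 < x < r -> 0 < g x < x.
Proof.
  intros Hg_into Hzg Hzgt.
  (* only 0 is sent to 0, hence z fixes 0 *)
  assert (Hzero : forall w, Ico0 r w -> z w = 0 -> w = 0).
  { intros w [Hw0 Hwr] Hw.
    destruct (Rle_lt_or_eq_dec 0 w Hw0) as [Hpos|]; auto.
    pose proof (Hzgt w (conj Hpos Hwr)). lra. }
  intros x Hx. assert (Dx : Ico0 r x) by (unfold Ico0; lra).
  assert (D0 : Ico0 r 0) by (unfold Ico0; lra).
  assert (Hz0 : z 0 = 0).
  { pose proof (Hzg 0 D0) as E.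
    pose proof (Hzero (g 0) (Hg_into 0 D0) E) as Hg0.
    rewrite Hg0 in E. exact E. }
  destruct (Hg_into x Dx) as [Hgx0 Hgxr]. pose proof (Hzg x Dx) as E.
  destruct (Rle_lt_or_eq_dec 0 (g x) Hgx0) as [Hpos|E0].
  - pose proof (Hzgt (g x) (conj Hpos Hgxr)). lra.
  - rewrite <- E0, Hz0 in E. lra.
Qed.

Lemma decreasing_not_in_list (s : nat -> R) (l : list R) :
  (forall n, s (S n) < s n) -> ~ (forall n, In (s n) l).
Proof.
  intros Hdec Hl.
  assert (Hlt : forall m k, s (S k + m)%nat < s m).
  { intros m k. induction k as [|k IH]; [apply Hdec|].
    specialize (Hdec (S k + m)%nat). simpl in *. lra. }
  assert (Hinj : forall m n, s m = s n -> m = n).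
  { intros m n Heq. destruct (Nat.lt_total m n) as [H|[H|H]]; auto.
    - replace n with (S (n - m - 1) + m)%nat in Heq by lia.
      specialize (Hlt m (n - m - 1)%nat). lra.
    - replace m with (S (m - n - 1) + n)%nat in Heq by lia.
      specialize (Hlt n (m - n - 1)%nat). lra. }
  assert (ND : NoDup (map s (seq 0 (S (length l))))).
  { apply Injective_map_NoDup; [exact Hinj | apply seq_NoDup]. }
  assert (Hincl : incl (map s (seq 0 (S (length l)))) l).
  { intros a Ha. apply in_map_iff in Ha. destruct Ha as [n [<- _]]. apply Hl. }
  pose proof (NoDup_incl_length ND Hincl) as Hlen.
  rewrite length_map, length_seq in Hlen. lia.
Qed.

Theorem lemma3p1 (r : R) (z f : R -> R)
  (hr : 0 < r)
  (hz : homeo_on (Ico0 r) z)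
  (hzgt : forall a, 0 < a < r -> z a > a)
  (hf : perm_on (Ico0 r) f)
  (hcomm : forall a, Ico0 r a -> f (z a) = z (f a))
  (hf0 : right_cont_at_in (Ico0 r) f 0)
  (hfin : finitely_many_discont (Ico0 r) f) :
  cont_on (Ico0 r) f.
Proof.
  destruct hz as [_ [Hz [g [Hg_into [Hg [_ Hzg]]]]]].
  destruct hf as [Hf_into _].
  destruct hfin as [l Hl].
  assert (Hconj : forall y, Ico0 r y -> f y = z (f (g y))).
  { intros y Dy. rewrite <- hcomm, Hzg; auto. }
  pose proof (inverse_below_identity r z g Hg_into Hzg hzgt) as Hbelow.
  intros x Dx. destruct (Req_dec x 0) as [->|Hx0].
  { apply cont_at_left_endpoint, hf0. }
  apply NNPP. intro Hdisc.
  assert (Hx : 0 < x < r) by (unfold Ico0 in Dx; lra).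
  (* the g-orbit of x consists of discontinuity points in (0,r) *)
  set (s := fun n => Nat.iter n g x).
  assert (Horbit : forall n, 0 < s n < r /\ ~ cont_at_in (Ico0 r) f (s n)).
  { induction n as [|n [Hpos Hdn]]; [split; auto|].
    change (s (S n)) with (g (s n)). pose proof (Hbelow _ Hpos).
    split; [lra|]. intro Hc. apply Hdn.
    apply (cont_at_in_conj _ f z g); auto. unfold Ico0; lra. }
  apply (decreasing_not_in_list s l).
  - intro n. apply Hbelow, Horbit.
  - intro n. destruct (Horbit n) as [Hpos Hdn]. apply Hl; auto. unfold Ico0; lra.
Qed.
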